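(* Let $n\ge 3$ and $d=\lfloor n/2\rfloor$. For $x\in Gr^{>0}(2,n)$ with spanning matrix $X$ having all $\Delta_{i,j}(X)>0$ ($i<j$), define $L(x)=D_d/D_1$. Then (1) $L(x)\le E(x)$, and (2) for the cyclic matrix $C$, $E([C])=L([C])=\sin(d\pi/n)/\sin(\pi/n)$.
   Context: For a real $2\times n$ matrix $X$ and $1\le i<j\le n$, $\Delta_{i,j}(X)$ is the determinant of the $2\times2$ submatrix of columns $i,j$. $Gr^{>0}(2,n)$ is the set of 2-dimensional subspaces of $\mathbb{R}^n$ having a spanning $2\times n$ matrix with all $\Delta_{i,j}>0$ ($i<j$); $E(x)=\max_{i<j}\Delta_{i,j}(X)/\min_{i<j}\Delta_{i,j}(X)$. Let $\sigma$ act on strictly increasing pairs by $\sigma(i,j)=(i+1,j+1)$ if $j<n$ and $\sigma(i,n)=(1,i+1)$; $O_k=\{\sigma^m(1,k+1):m=0,\dots,n-1\}$ and $D_k=\left(\prod_{m=0}^{n-1}\Delta_{\sigma^m(1,k+1)}(X)\right)^{1/n}$ for $k\in\{1,\dots,n-1\}$ (the ratio $D_d/D_1$ does not depend on the choice of $X$). The cyclic matrix $C$ has $m$-th column $(\cos((m-1)\pi/n),\sin((m-1)\pi/n))^T$. *)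

From HB Require Import structures.
From mathcomp Require Import all_boot all_order all_algebra.
From mathcomp Require Import all_classical all_reals all_analysis.
Set Implicit Arguments. Unset Strict Implicit. Unset Printing Implicit Defensive.
Import Order.TTheory GRing.Theory Num.Theory.
Local Open Scope ring_scope.

Section Defs.
Variable R : realType.

(* Columns are 0-based ordinals 'I_n; paper index m corresponds to ordinal m-1. *)
Definition Delta n (X : 'M[R]_(2, n)) (i j : 'I_n) : R :=
  X 0 i * X 1 j - X 0 j * X 1 i.

(* Delta with 1-based nat indices (paper convention); 0 outside 1..n. *)
Definition DeltaN n (X : 'M[R]_(2, n)) (i j : nat) : R :=
  match (insub i.-1 : option 'I_n), (insub j.-1 : option 'I_n) with
  | Some a, Some b => Delta X a b
  | _, _ => 0
  end.

(* max over i<j of Delta; all values positive under the hypotheses, so 0 is a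
   harmless identity when n >= 2. *)
Definition Dmax n (X : 'M[R]_(2, n)) : R :=
  \big[Num.max/0]_(i : 'I_n) \big[Num.max/0]_(j : 'I_n | (i < j)%N) Delta X i j.

(* min over i<j of Delta; Dmax is an upper bound of all terms, so it is a
   harmless identity for min. *)
Definition Dmin n (X : 'M[R]_(2, n)) : R :=
  \big[Num.min/Dmax X]_(i : 'I_n) \big[Num.min/Dmax X]_(j : 'I_n | (i < j)%N) Delta X i j.

Definition E n (X : 'M[R]_(2, n)) : R := Dmax X / Dmin X.

(* sigma on 1-based strictly increasing pairs *)
Definition sigma (n : nat) (p : nat * nat) : nat * nat :=
  if (p.2 < n)%N then (p.1.+1, p.2.+1) else (1%N, p.1.+1).

Definition Dk n (X : 'M[R]_(2, n)) (k : nat) : R :=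
  powR (\prod_(m < n) DeltaN X (iter m (sigma n) (1%N, k.+1)).1
                                (iter m (sigma n) (1%N, k.+1)).2)
       (n%:R^-1).

Definition L n (X : 'M[R]_(2, n)) : R := Dk X n./2 / Dk X 1.

(* cyclic matrix: column m (1-based) is (cos((m-1)pi/n), sin((m-1)pi/n)) *)
Definition Cyc n : 'M[R]_(2, n) :=
  \matrix_(r < 2, m < n)
    (if r == 0 then cos ((m : nat)%:R * pi / n%:R) else sin ((m : nat)%:R * pi / n%:R)).

End Defs.

From HB Require Import structures.
From mathcomp Require Import all_boot all_order all_algebra.
From mathcomp Require Import all_classical all_reals all_analysis.
From mathcomp Require Import zify ring lra.
Import Order.TTheory GRing.Theory Num.Theory.
Local Open Scope ring_scope.

(* For k in 1..n-1 the pairs sigma^m(1,k+1) are exactly pairs i<j whose gap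
   j-i is k or n-k (the gap is invariant under sigma up to k <-> n-k).  Hence
   D_k is the geometric mean of n minors Delta_{i,j}(X) with such gaps, and
   therefore lies between the smallest and the largest minor of X:
       min Delta <= D_k <= max Delta.
   Applied to k = d and k = 1 this gives L = D_d/D_1 <= max/min = E, which is
   part (1).  For the cyclic matrix C, Delta_{i,j}(C) = sin((j-i)pi/n) depends
   only on the gap, is symmetric under gap <-> n-gap, and sin is increasing on
   [0,pi/2]; so D_k(C) = sin(k pi/n), the largest minor is sin(d pi/n) and the
   smallest one is sin(pi/n), which gives part (2). *)

Set Implicit Arguments.
Unset Strict Implicit.

Section ExtremeMinors.
Variables (R : realType) (n : nat) (X : 'M[R]_(2, n)).

Lemma le_Dmax (i j : 'I_n) : (i < j)%N -> Delta X i j <= Dmax X.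
Proof.
by move=> ij; apply: le_trans (le_bigmax_cond _ _ ij) (le_bigmax _ _ i).
Qed.

Lemma Dmax_le (s : R) : 0 <= s ->
  (forall i j : 'I_n, (i < j)%N -> Delta X i j <= s) -> Dmax X <= s.
Proof. by move=> s0 hs; apply: bigmax_le => // i _; apply: bigmax_le => // j; apply: hs. Qed.

Lemma Dmin_le (i j : 'I_n) : (i < j)%N -> Dmin X <= Delta X i j.
Proof.
by move=> ij; apply: le_trans (bigmin_le _ i _) (bigmin_le_cond _ _ ij).
Qed.

Lemma le_Dmin (s : R) : s <= Dmax X ->
  (forall i j : 'I_n, (i < j)%N -> s <= Delta X i j) -> s <= Dmin X.
Proof. by move=> sD hs; apply: le_bigmin => // i _; apply: le_bigmin => // j; apply: hs. Qed.

Lemma Dmin_gt0 : (1 < n)%N ->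
  (forall i j : 'I_n, (i < j)%N -> 0 < Delta X i j) -> 0 < Dmin X.
Proof.
move=> n1 hpos.
have Dmax_gt0 : 0 < Dmax X.
  exact: lt_le_trans (hpos (Ordinal (ltnW n1)) (Ordinal n1) isT) (le_Dmax _).
by apply: lt_bigmin => // i _; apply: lt_bigmin => // j; apply: hpos.
Qed.

End ExtremeMinors.

Definition gap_pair (n k : nat) (p : nat * nat) : bool :=
  [&& 0 < p.1, p.1 < p.2, p.2 <= n & (p.2 - p.1 == k) || (p.2 - p.1 == n - k)]%N.

(* sigma either shifts a pair, keeping its gap, or sends (i, n) to (1, i+1),
   whose gap i = n - (n - i) swaps k and n - k. *)
Lemma sigma_gap_pair n k p : (k <= n)%N -> gap_pair n k p -> gap_pair n k (sigma n p).
Proof. by case: p => a b kn; rewrite /gap_pair /sigma /=; case: ifP => /= hb; lia. Qed.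

Definition orbit_pair (n k m : nat) : nat * nat := iter m (sigma n) (1%N, k.+1).

Lemma gap_pair_orbit n k m : (0 < k < n)%N -> gap_pair n k (orbit_pair n k m).
Proof.
move=> hk; elim: m => [|m IH]; first by rewrite /gap_pair /=; lia.
by apply: sigma_gap_pair => //; lia.
Qed.

Lemma DeltaN_gap_pair (R : realType) n (X : 'M[R]_(2, n)) k p : gap_pair n k p ->
  exists i j : 'I_n, [/\ (i < j)%N, ((j - i == k) || (j - i == n - k))%N
                       & DeltaN X p.1 p.2 = Delta X i j].
Proof.
case: p => a b; rewrite /gap_pair /DeltaN /= => /and4P[a0 ab bn gap].
case: insubP => [i _ iE|]; last by move/negP; case; lia.
case: insubP => [j _ jE|]; last by move/negP; case; lia.
by exists i, j; split => //; rewrite iE jE; lia.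
Qed.

Lemma powR_root (R : realType) n (x : R) : (0 < n)%N -> 0 <= x ->
  powR (x ^+ n) n%:R^-1 = x.
Proof.
move=> n0 x0; rewrite -powR_mulrn // -powRrM mulfV ?powRr1 //.
by rewrite pnatr_eq0 -lt0n.
Qed.

Lemma geomean_between (R : realType) n (F : 'I_n -> R) (lo hi : R) :
  (0 < n)%N -> 0 <= lo -> (forall m, lo <= F m <= hi) ->
  lo <= powR (\prod_m F m) n%:R^-1 <= hi.
Proof.
move=> n0 lo0 hF.
have F0 m : 0 <= F m by case/andP: (hF m) => + _; apply: le_trans.
have hi0 : 0 <= hi by case/andP: (hF (Ordinal n0)) => _; apply: le_trans.
have root_mono (a b : R) : 0 <= a -> a <= b -> powR a n%:R^-1 <= powR b n%:R^-1.
  move=> a0 ab; apply: ge0_ler_powR; rewrite ?nnegrE ?invr_ge0 ?ler0n //.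
  exact: le_trans ab.
have prod0 : 0 <= \prod_m F m by apply: prodr_ge0.
apply/andP; split.
- rewrite -[X in X <= _](powR_root n0 lo0); apply: root_mono; first exact: exprn_ge0.
  rewrite -[n in lo ^+ n]card_ord -prodr_const; apply: ler_prod => m _.
  by rewrite lo0; case/andP: (hF m).
- rewrite -[X in _ <= X](powR_root n0 hi0); apply: root_mono => //.
  rewrite -[n in hi ^+ n]card_ord -prodr_const; apply: ler_prod => m _.
  by rewrite F0; case/andP: (hF m).
Qed.

Lemma Dk_between (R : realType) n (X : 'M[R]_(2, n)) k (lo hi : R) :
  (0 < k < n)%N -> 0 <= lo ->
  (forall i j : 'I_n, (i < j)%N -> ((j - i == k) || (j - i == n - k))%N ->
     lo <= Delta X i j <= hi) ->
  lo <= Dk X k <= hi.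
Proof.
move=> hk lo0 hb; rewrite /Dk; apply: geomean_between => //; first lia.
move=> m; have [i [j [ij gap ->]]] := DeltaN_gap_pair X (gap_pair_orbit m hk).
exact: hb.
Qed.

Lemma Dk_between_extremes (R : realType) n (X : 'M[R]_(2, n)) k :
  (0 < k < n)%N -> (forall i j : 'I_n, (i < j)%N -> 0 < Delta X i j) ->
  Dmin X <= Dk X k <= Dmax X.
Proof.
move=> hk hpos; apply: Dk_between => //; last by move=> i j ij _; rewrite Dmin_le ?le_Dmax.
by apply/ltW/Dmin_gt0 => //; lia.
Qed.

Lemma ler_sin (R : realType) :
  {in `[- (pi / 2), pi / 2] &, {mono (@sin R) : x y / x <= y}}.
Proof. by apply: le_mono_in => x y hx hy; rewrite ltr_sin. Qed.

(* Supplementary angles have the same sine; this makes the minors of C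
   symmetric under gap <-> n - gap. *)
Lemma sin_pi_sub (R : realType) (x : R) : sin (pi - x) = sin x.
Proof. by rewrite addrC sinDpi sinN opprK. Qed.

Section Cyclic.
Variables (R : realType) (n : nat).
Hypothesis n3 : (3 <= n)%N.

Definition cyc_sin (k : nat) : R := sin (k%:R * pi / n%:R).

(* By the subtraction formula for sin, the minors of C depend only on the gap. *)
Lemma Delta_Cyc (i j : 'I_n) : (i <= j)%N -> Delta (Cyc R n) i j = cyc_sin (j - i).
Proof. by move=> ij; rewrite /Delta /cyc_sin !mxE /= natrB // !mulrBl sinB; ring. Qed.

Lemma cyc_sin_sym k : (k <= n)%N -> cyc_sin (n - k) = cyc_sin k.
Proof.
move=> kn; rewrite /cyc_sin natrB // !mulrBl mulrAC divff ?mul1r ?sin_pi_sub //.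
by rewrite pnatr_eq0; lia.
Qed.

Lemma cyc_angle_range k : (k.*2 <= n)%N -> 0 <= k%:R * (pi : R) / n%:R <= pi / 2.
Proof.
move=> kn; have pi0 := pi_gt0 R; have n0 : (0 : R) < n%:R by rewrite ltr0n; lia.
have k2n : k%:R * 2 <= n%:R :> R by rewrite -natrM ler_nat; lia.
by rewrite divr_ge0 ?mulr_ge0 ?ler0n ?(ltW pi0) //= ler_pdivrMr //; nra.
Qed.

Lemma cyc_sin_mono j k : (j <= k)%N -> (k.*2 <= n)%N -> cyc_sin j <= cyc_sin k.
Proof.
move=> jk kn; have pi0 := pi_gt0 R.
have /andP[aj0 aj2] := @cyc_angle_range j ltac:(lia).
have /andP[ak0 ak2] := cyc_angle_range kn.
rewrite /cyc_sin ler_sin ?in_itv /=; try (apply/andP; split; lra).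
by rewrite ler_wpM2r ?invr_ge0 ?ler0n // ler_wpM2r ?ler_nat ?ltW.
Qed.

Lemma cyc_sin1_gt0 : 0 < cyc_sin 1.
Proof.
have pi0 := pi_gt0 R; have n1 : (1 : R) < n%:R by rewrite ltr1n; lia.
rewrite /cyc_sin mul1r; apply: sin_gt0_pi; apply/andP; split.
  by rewrite divr_gt0 // (lt_trans _ n1).
by rewrite ltr_pdivrMr ?(lt_trans _ n1) //; nra.
Qed.

Lemma cyc_sin_bounds k : (0 < k < n)%N ->
  cyc_sin 1 <= cyc_sin k <= cyc_sin n./2.
Proof.
wlog kd : k / (k <= n./2)%N.
  move=> W hk; case: (leqP k n./2) => kd; first exact: W.
  by rewrite -(@cyc_sin_sym k); [apply: W|]; lia.
by move=> hk; rewrite !cyc_sin_mono //; lia.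
Qed.

Lemma Delta_Cyc_bounds (i j : 'I_n) : (i < j)%N ->
  cyc_sin 1 <= Delta (Cyc R n) i j <= cyc_sin n./2.
Proof.
move=> ij; have jn := ltn_ord j.
by rewrite Delta_Cyc ?(ltnW ij) // cyc_sin_bounds //; lia.
Qed.

Lemma Dmax_Cyc : Dmax (Cyc R n) = cyc_sin n./2.
Proof.
have n0 : (0 < n)%N by lia.
have d_lt_n : (n./2 < n)%N by lia.
apply/le_anti/andP; split.
  apply: Dmax_le => [|i j ij].
    by apply: le_trans (ltW cyc_sin1_gt0) _; rewrite cyc_sin_mono //; lia.
  by case/andP: (Delta_Cyc_bounds ij).
have := le_Dmax (Cyc R n) (i := Ordinal n0) (j := Ordinal d_lt_n) ltac:(simpl; lia).
by rewrite Delta_Cyc //= subn0.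
Qed.

Lemma Dmin_Cyc : Dmin (Cyc R n) = cyc_sin 1.
Proof.
have one_lt_n : (1 < n)%N by lia.
apply/le_anti/andP; split.
  have := Dmin_le (Cyc R n) (i := Ordinal (ltnW one_lt_n)) (j := Ordinal one_lt_n) isT.
  by rewrite Delta_Cyc.
apply: le_Dmin => [|i j ij]; first by rewrite Dmax_Cyc cyc_sin_mono //; lia.
by case/andP: (Delta_Cyc_bounds ij).
Qed.

(* Along a sigma-orbit all minors of C equal sin(k pi/n), so D_k(C) = sin(k pi/n). *)
Lemma Dk_Cyc k : (0 < k < n)%N -> Dk (Cyc R n) k = cyc_sin k.
Proof.
move=> hk; have sk0 : 0 <= cyc_sin k.
  by apply: le_trans (ltW cyc_sin1_gt0) _; case/andP: (cyc_sin_bounds hk).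
apply/le_anti; rewrite andbC; apply: Dk_between => // i j ij /orP[] /eqP gap; rewrite Delta_Cyc ?(ltnW ij) // gap.
  by rewrite lexx.
by rewrite cyc_sin_sym ?lexx //; lia.
Qed.

End Cyclic.

Unset Implicit Arguments.

Theorem mainTheorem8 (R : realType) (n : nat) (hn : (3 <= n)%N) :
  (forall X : 'M[R]_(2, n),
      (forall i j : 'I_n, (i < j)%N -> 0 < Delta X i j) ->
      L X <= E X) /\
  (E (Cyc R n) = L (Cyc R n) /\
   L (Cyc R n) = sin ((n./2)%:R * pi / n%:R) / sin (pi / n%:R)).
Proof.
have hd : (0 < n./2 < n)%N by lia.
have h1 : (0 < 1 < n)%N by lia.
have LC : L (Cyc R n) = cyc_sin R n n./2 / cyc_sin R n 1 by rewrite /L !Dk_Cyc.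
split; last by rewrite /E Dmax_Cyc // Dmin_Cyc // LC /cyc_sin mul1r.
move=> X hpos.
have /andP[Dd_ge Dd_le] := Dk_between_extremes hd hpos.
have /andP[D1_ge D1_le] := Dk_between_extremes h1 hpos.
have Dmin0 : 0 < Dmin X by apply: Dmin_gt0 => //; lia.
rewrite /L /E; apply: ler_pM => //; first exact: le_trans (ltW Dmin0) Dd_ge.
  by rewrite invr_ge0 (le_trans (ltW Dmin0)).
by rewrite lef_pV2 ?posrE // (lt_le_trans Dmin0).
Qed.
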